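(* Let $\Gamma=(V,E)$ be a distance-transitive graph on $V=\{1,\dots,n\}$ and let $(u_{ij})_{1\le i,j\le n}$ be the generators of $C(G_{aut}^+(\Gamma))$. Let $j_1,l_1\in V$ and put $m:=d(j_1,l_1)$. Suppose that $u_{aj_1}u_{bl_1}=u_{bl_1}u_{aj_1}$ for all $a,b\in V$ with $d(a,b)=m$. Then $u_{ij}u_{kl}=u_{kl}u_{ij}$ for all $i,j,k,l\in V$ with $d(i,k)=d(j,l)=m$.
   Context: $\Gamma$ is a finite simple connected undirected graph with vertex set $V=\{1,\dots,n\}$ and edge set $E$; $d$ is the graph distance. An automorphism of $\Gamma$ is a bijection $\sigma:V\to V$ with $(i,j)\in E\iff(\sigma(i),\sigma(j))\in E$. $\Gamma$ is distance-transitive if it is regular and for all pairs $(i,k),(j,l)$ of vertices with $d(i,k)=d(j,l)$ there is an automorphism $\phi$ with $\phi(i)=j$, $\phi(k)=l$. $C(G_{aut}^+(\Gamma))$ is the universal unital $C^*$-algebra generated by $u_{ij}$, $1\le i,j\le n$, with relations: (R1) $u_{ij}=u_{ij}^*=u_{ij}^2$; (R2) $\sum_{l} u_{il}=1=\sum_{l} u_{li}$ for all $i$; (R3) $u_{ij}u_{kl}=u_{kl}u_{ij}=0$ whenever exactly one of $(i,k)\in E$, $(j,l)\in E$ holds. *)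

From Stdlib Require Import Reals.
From mathcomp Require Import all_boot all_fingroup.
Set Implicit Arguments. Unset Strict Implicit. Unset Printing Implicit Defensive.

Record cplx := mkCplx { Cre : R; Cim : R }.
Definition cadd (a b : cplx) := mkCplx (Rplus (Cre a) (Cre b)) (Rplus (Cim a) (Cim b)).
Definition cmul (a b : cplx) :=
  mkCplx (Rminus (Rmult (Cre a) (Cre b)) (Rmult (Cim a) (Cim b)))
         (Rplus (Rmult (Cre a) (Cim b)) (Rmult (Cim a) (Cre b))).
Definition cone := mkCplx R1 R0.
Definition cconj (a : cplx) := mkCplx (Cre a) (Ropp (Cim a)).
Definition cabs (a : cplx) : R := sqrt (Rplus (Rsqr (Cre a)) (Rsqr (Cim a))).

Record CStarAlgebra := {
  car :> Type;
  azero : car; aone : car;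
  aadd : car -> car -> car; aopp : car -> car; amul : car -> car -> car;
  asmul : cplx -> car -> car; astar : car -> car; anorm : car -> R;
  addA : forall x y z, aadd x (aadd y z) = aadd (aadd x y) z;
  addC : forall x y, aadd x y = aadd y x;
  add0 : forall x, aadd azero x = x;
  addN : forall x, aadd (aopp x) x = azero;
  mulA : forall x y z, amul x (amul y z) = amul (amul x y) z;
  mul1l : forall x, amul aone x = x;
  mul1r : forall x, amul x aone = x;
  mulDl : forall x y z, amul (aadd x y) z = aadd (amul x z) (amul y z);
  mulDr : forall x y z, amul x (aadd y z) = aadd (amul x y) (amul x z);
  smulDl : forall a b x, asmul (cadd a b) x = aadd (asmul a x) (asmul b x);
  smulDr : forall a x y, asmul a (aadd x y) = aadd (asmul a x) (asmul a y);
  smulA : forall a b x, asmul (cmul a b) x = asmul a (asmul b x);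
  smul1 : forall x, asmul cone x = x;
  smul_mull : forall a x y, amul (asmul a x) y = asmul a (amul x y);
  smul_mulr : forall a x y, amul x (asmul a y) = asmul a (amul x y);
  starD : forall x y, astar (aadd x y) = aadd (astar x) (astar y);
  starZ : forall a x, astar (asmul a x) = asmul (cconj a) (astar x);
  starM : forall x y, astar (amul x y) = amul (astar y) (astar x);
  starK : forall x, astar (astar x) = x;
  norm_eq0 : forall x, anorm x = R0 -> x = azero;
  norm_triangle : forall x y, Rle (anorm (aadd x y)) (Rplus (anorm x) (anorm y));
  normZ : forall a x, anorm (asmul a x) = Rmult (cabs a) (anorm x);
  norm_submul : forall x y, Rle (anorm (amul x y)) (Rmult (anorm x) (anorm y));
  norm_cstar : forall x, anorm (amul (astar x) x) = Rmult (anorm x) (anorm x);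
  complete : forall s : nat -> car,
    (forall eps, Rlt R0 eps -> exists N, forall p q, (N <= p)%N -> (N <= q)%N ->
        Rlt (anorm (aadd (s p) (aopp (s q)))) eps) ->
    exists x, forall eps, Rlt R0 eps -> exists N, forall p, (N <= p)%N ->
        Rlt (anorm (aadd (s p) (aopp x))) eps
}.

Definition Asum (A : CStarAlgebra) (n : nat) (f : 'I_n -> A) : A :=
  foldr (fun l acc => aadd (f l) acc) (azero A) (enum 'I_n).

Definition simple_graph (n : nat) (e : rel 'I_n) : Prop :=
  (forall x y, e x y = e y x) /\ (forall x, e x x = false).

Definition connected_graph (n : nat) (e : rel 'I_n) : Prop :=
  forall x y, connect e x y.

Definition regular_graph (n : nat) (e : rel 'I_n) : Prop :=
  forall x y, #|[set z | e x z]| = #|[set z | e y z]|.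

Fixpoint reach (n : nat) (e : rel 'I_n) (k : nat) (x y : 'I_n) : bool :=
  if k is k'.+1 then (x == y) || [exists z, e x z && reach e k' z y]
  else x == y.

(* graph distance: least k such that y is reachable from x in <= k steps
   (well-defined for connected graphs, where it is < n) *)
Definition gdist (n : nat) (e : rel 'I_n) (x y : 'I_n) : nat :=
  find (fun k => reach e k x y) (iota 0 n).

Definition is_automorphism (n : nat) (e : rel 'I_n) (s : {perm 'I_n}) : Prop :=
  forall i j, e i j = e (s i) (s j).

Definition distance_transitive (n : nat) (e : rel 'I_n) : Prop :=
  regular_graph e /\
  forall i k j l, gdist e i k = gdist e j l ->
    exists phi : {perm 'I_n}, is_automorphism e phi /\ phi i = j /\ phi k = l.

(* ---------- Relations (R1)-(R3) of C(G_aut^+(Gamma)) ---------- *)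
Definition qaut_rel (n : nat) (e : rel 'I_n) (A : CStarAlgebra)
    (u : 'I_n -> 'I_n -> A) : Prop :=
  (forall i j, u i j = astar (u i j) /\ u i j = amul (u i j) (u i j)) /\
  (forall i, Asum (fun l => u i l) = aone A /\ Asum (fun l => u l i) = aone A) /\
  (forall i j k l, e i k != e j l ->
      amul (u i j) (u k l) = azero A /\ amul (u k l) (u i j) = azero A).

(* A relation P holds for the generators of the universal C*-algebra
   C(G_aut^+(Gamma)) iff it holds for every family satisfying (R1)-(R3)
   in every unital C*-algebra (universal property; P is preserved
   by *-homomorphisms for the commutation relations used here). *)
Definition holds_in_Caut (n : nat) (e : rel 'I_n)
    (P : forall A : CStarAlgebra, ('I_n -> 'I_n -> A) -> Prop) : Prop :=
  forall (A : CStarAlgebra) (u : 'I_n -> 'I_n -> A), qaut_rel e u -> P A u.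

(* The twisted family [u i (phi j)], for an automorphism [phi] of the graph,
   again satisfies (R1)-(R3): (R1) and (R3) because [phi] preserves adjacency,
   (R2) by reindexing the row sums along [phi]. By universality the hypothesis
   holds for the twisted family, and distance transitivity provides a [phi]
   sending [(j1, l1)] to any pair [(j, l)] at the same distance. *)
From HB Require Import structures.
From Stdlib Require Import Reals.
From mathcomp Require Import all_boot all_fingroup.

Set Implicit Arguments.
Unset Strict Implicit.
Unset Printing Implicit Defensive.

Section Asum.

Variable A : CStarAlgebra.

HB.instance Definition _ :=
  Monoid.isComLaw.Build (car A) (azero A) (@aadd A) (@addA A) (@addC A) (@add0 A).

Lemma AsumE n (f : 'I_n -> A) : Asum f = \big[@aadd A/azero A]_(l <- enum 'I_n) f l.
Proof. by rewrite /Asum; elim: (enum 'I_n) => [|x s IH] /=; rewrite ?big_nil ?big_cons ?IH. Qed.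

Lemma Asum_perm n (f : 'I_n -> A) (s : {perm 'I_n}) : Asum (fun l => f (s l)) = Asum f.
Proof.
rewrite !AsumE !big_enum /= [RHS](reindex_inj (@perm_inj _ s)) /=.
by apply: eq_bigl => i; rewrite !inE.
Qed.

End Asum.

Lemma qaut_rel_perm_col n (e : rel 'I_n) (A : CStarAlgebra) (u : 'I_n -> 'I_n -> A)
    (phi : {perm 'I_n}) :
  is_automorphism e phi -> qaut_rel e u -> qaut_rel e (fun i j => u i (phi j)).
Proof.
move=> aut_phi [idem [sums orth]]; split; [|split].
- by move=> i j; apply: idem.
- move=> i; split; last exact: (sums (phi i)).2.
  by rewrite (Asum_perm (u i)); exact: (sums i).1.
- by move=> i j k l; rewrite [e j l]aut_phi; apply: orth.
Qed.

Theorem lemma3p3 (n : nat) (e : rel 'I_n) (j1 l1 : 'I_n) :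
  simple_graph e -> connected_graph e -> distance_transitive e ->
  holds_in_Caut e (fun A u => forall a b, gdist e a b = gdist e j1 l1 ->
                     amul (u a j1) (u b l1) = amul (u b l1) (u a j1)) ->
  holds_in_Caut e (fun A u => forall i j k l,
                     gdist e i k = gdist e j1 l1 -> gdist e j l = gdist e j1 l1 ->
                     amul (u i j) (u k l) = amul (u k l) (u i j)).
Proof.
move=> _ _ [_ dist_trans] comm_j1l1 A u u_rel i j k l dik djl.
have [phi [aut_phi [phi_j1 phi_l1]]] := dist_trans j1 l1 j l (esym djl).
have := comm_j1l1 A _ (qaut_rel_perm_col aut_phi u_rel) i k dik.
by rewrite /= phi_j1 phi_l1.
Qed.
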